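(* Let $(\Omega,\mathcal F)$ be one of $(\{1,\dots,n\},2^{\{1,\dots,n\}})$, $(\mathbb N,2^{\mathbb N})$, or $([0,1],\mathcal B([0,1]))$, let $\mathcal X$ be the set of bounded measurable functions on it, and let $v$ be a continuous binary capacity. Then $I_v$ is convex on $\mathcal X$ if and only if there exists a finite set $A\subseteq\Omega$ such that $I_v(X)=\max_{\omega\in A}X(\omega)$ for all $X\in\mathcal X$.
   Context: A binary capacity is an increasing function $v:\mathcal F\to\{0,1\}$ (i.e. $v(A)\le v(B)$ for $A\subseteq B$) with $v(\varnothing)=0$, $v(\Omega)=1$; it is continuous if $v(A_n)\to0$ whenever $A_n\in\mathcal F$ decrease to $\varnothing$. $I_v(X)=\int_{-\infty}^0(v(X\ge x)-1)\,\mathrm dx+\int_0^\infty v(X\ge x)\,\mathrm dx$. Convexity means $I_v(\lambda X+(1-\lambda)Y)\le\lambda I_v(X)+(1-\lambda)I_v(Y)$ for all $\lambda\in[0,1]$, $X,Y\in\mathcal X$. *)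

From HB Require Import structures.
From mathcomp Require Import all_boot all_order all_algebra.
From mathcomp Require Import all_classical all_reals all_analysis.
Set Implicit Arguments. Unset Strict Implicit. Unset Printing Implicit Defensive.
Import Order.TTheory GRing.Theory Num.Theory.
Import numFieldNormedType.Exports.
Local Open Scope classical_set_scope.
Local Open Scope ring_scope.

Section Choquet.
Context {R : realType} {T : Type}.
(* Omega : the sample space (as a subset of T), F : the sigma-algebra
   (a family of subsets of Omega), XX : the admissible random variables. *)
Variables (Omega : set T) (F : set (set T)) (XX : set (T -> R)).

Definition upper (X : T -> R) (x : R) : set T := [set w | Omega w /\ x <= X w].

Definition binary_capacity (v : set T -> bool) : Prop :=
  v set0 = false /\ v Omega = true /\
  (forall A B, F A -> F B -> A `<=` B -> (v A <= v B)%O).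

Definition continuous_capacity (v : set T -> bool) : Prop :=
  forall An : nat -> set T, (forall n, F (An n)) ->
    (forall n, An n.+1 `<=` An n) -> \bigcap_n An n = set0 ->
    (fun n => ((v (An n))%:R : R)) @ \oo --> 0.

Definition choquet (v : set T -> bool) (X : T -> R) : \bar R :=
  (\int[lebesgue_measure]_(x in `]-oo, 0%R[) (((v (upper X x))%:R - 1)%:E)
   + \int[lebesgue_measure]_(x in `[0%R, +oo[) (((v (upper X x))%:R)%:E))%E.

Definition choquet_convex (v : set T -> bool) : Prop :=
  forall (l : R), 0 <= l <= 1 -> forall X Y, XX X -> XX Y ->
    (choquet v (fun w => (l * X w + (1 - l) * Y w)%R)
     <= l%:E * choquet v X + (1 - l)%R%:E * choquet v Y)%E.

Definition is_max_over (A : set T) (X : T -> R) (m : R) : Prop :=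
  (exists2 w, A w & X w = m) /\ (forall w, A w -> X w <= m).

Definition prop5_on : Prop :=
  forall v : set T -> bool, binary_capacity v -> continuous_capacity v ->
    (choquet_convex v <->
     exists A : set T, [/\ finite_set A, A `<=` Omega &
       forall X, XX X -> exists2 m, is_max_over A X m & choquet v X = m%:E]).
End Choquet.

Definition bounded_on {R : realType} {T : Type} (D : set T) (X : T -> R) : Prop :=
  exists M : R, forall w, D w -> `|X w| <= M.

From HB Require Import structures.
From mathcomp Require Import all_boot all_order all_algebra finmap.
From mathcomp Require Import all_classical all_reals all_analysis.
From mathcomp Require Import measurable_realfun lra.
Import numFieldNormedType.Exports.
Import Order.TTheory GRing.Theory Num.Theory.
Local Open Scope classical_set_scope.
Local Open Scope ring_scope.

(* Since v only takes the values 0 and 1, I_v(X) is the level c at which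
   v(X >= x) drops from 1 to 0.  Testing convexity on (1_A + 1_B)/2 shows that
   the v-null sets are closed under finite unions.  On each of the three spaces,
   continuity of v (and, on [0,1], compactness) covers Omega by finitely many
   points and finitely many null sets.  Hence every event of capacity 1 contains
   an atom w, i.e. v{w} = 1, there are finitely many atoms, and I_v(X) is the
   maximum of X over them.  Conversely, a maximum over a finite set is convex. *)

Lemma choquet_integral_threshold {R : realType} (g : R -> bool) (c : R) :
  (forall x, g x = (x <= c)) ->
  (\int[lebesgue_measure]_(x in `]-oo, 0%R[) (((g x)%:R - 1)%:E)
   + \int[lebesgue_measure]_(x in `[0%R, +oo[) (((g x)%:R)%:E))%E = c%:E.
Proof.
move=> gE.
have negE x : ((g x)%:R - 1 : R)%:E = (- (\1_`]c, +oo[ x)%:E)%E.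
  rewrite indicE gE mem_setE in_itv /= andbT ltNge.
  by case: (x <= c); rewrite /= ?subrr ?oppr0 // sub0r.
have posE x : ((g x)%:R : R)%:E = (\1_`]-oo, c] x)%:E.
  by rewrite indicE gE mem_setE in_itv.
under eq_integral do rewrite negE.
under [X in (_ + X)%E]eq_integral do rewrite posE.
rewrite integral_ge0N; last by move=> x _; rewrite lee_fin indicE; case: (_ \in _).
rewrite !integral_indic // -!set_itvI.
rewrite -[X in (- X + _)%E]/(lebesgue_measure _) -[X in (_ + X)%E]/(lebesgue_measure _).
rewrite !lebesgue_measure_itv /= !lte_fin; case: ifPn => c_lt0; case: ifPn => c_gt0.
- by have := lt_trans c_lt0 c_gt0; rewrite ltxx.
- by rewrite add0e adde0 EFinN oppeK.
- by rewrite oppe0 add0e oppr0 adde0.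
- by rewrite oppe0 adde0; congr EFin; apply/eqP; rewrite eq_le !leNgt c_lt0 c_gt0.
Qed.

Lemma bigcup_finType {T : Type} {J : finType} (N : J -> set T) :
  \bigcup_j N j = \big[setU/set0]_j N j.
Proof.
by rewrite -bigcup_pred; congr (\bigcup_(j in _) _); apply/seteqP; split.
Qed.

Lemma continuous_capacity_null {R : realType} {T : Type} {F : set (set T)}
    {v : set T -> bool} {An : nat -> set T} :
  continuous_capacity (R:=R) F v -> (forall n, F (An n)) ->
  (forall n, An n.+1 `<=` An n) -> \bigcap_n An n = set0 ->
  exists n, v (An n) = false.
Proof.
move=> contv FA decA capA.
have /cvgrPdist_lt /(_ 1 ltr01) [N _ near1] := contv An FA decA capA.
exists N; move: (near1 N (leqnn N)); rewrite sub0r normrN.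
by case: (v _) => //; rewrite normr1 ltxx.
Qed.

Section choquet_binary_capacity.
Context {R : realType} {T : Type}.
Variables (Omega : set T) (F : set (set T)) (XX : set (T -> R)).
Hypothesis F_sub : forall {A}, F A -> A `<=` Omega.
Hypothesis F0 : F set0.
Hypothesis FT : F Omega.
Hypothesis F_set1 : forall {w}, Omega w -> F [set w].
Hypothesis FU : forall {A B}, F A -> F B -> F (A `|` B).
Hypothesis F_upper : forall {X}, XX X -> forall x, F (upper Omega X x).
Hypothesis XX_indic : forall {A}, F A -> XX \1_A.
Hypothesis XX_conv : forall {l : R} {X Y}, 0 <= l <= 1 -> XX X -> XX Y ->
  XX (fun w => l * X w + (1 - l) * Y w).

Definition capacity_null (v : set T -> bool) (N : set T) := F N /\ v N = false.

Definition finite_mod_null (v : set T -> bool) :=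
  exists (I J : finType) (p : I -> T) (N : J -> set T),
    (forall j, capacity_null v (N j)) /\ Omega `<=` range p `|` \bigcup_j N j.

Definition atoms (v : set T -> bool) := [set w | Omega w /\ v [set w]].

Section fixed_capacity.
Context {v : set T -> bool}.

Hypothesis capv : binary_capacity Omega F v.

Lemma capacity0 : v set0 = false. Proof. by case: capv. Qed.

Lemma capacityT : v Omega. Proof. by case: capv => _ []. Qed.

Lemma capacity_le {A B : set T} : F A -> F B -> A `<=` B -> v A -> v B.
Proof.
case: capv => _ [_ le_v] FA FB AB.
by move: (le_v A B FA FB AB); case: (v A); case: (v B).
Qed.

Lemma choquet_threshold (X : T -> R) (c : R) :
  (forall x, v (upper Omega X x) = (x <= c)) -> choquet Omega v X = c%:E.
Proof. exact: choquet_integral_threshold. Qed.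

Lemma choquet_step (X : T -> R) (a : R) (S : set T) : 0 < a ->
  (forall x, x <= 0 -> upper Omega X x = Omega) ->
  (forall x, 0 < x <= a -> upper Omega X x = S) ->
  (forall x, a < x -> v (upper Omega X x) = false) ->
  choquet Omega v X = ((v S)%:R * a)%:E.
Proof.
move=> a_gt0 upper_low upper_mid upper_high; apply: choquet_threshold => x.
have [x_le0|x_gt0] := leP x 0.
  rewrite upper_low // capacityT; apply/esym/(le_trans x_le0).
  by rewrite mulr_ge0 // ltW.
have [x_lea|x_gta] := leP x a.
  by rewrite upper_mid ?x_gt0 //; case: (v S); rewrite ?mul1r ?mul0r // leNgt x_gt0.
rewrite upper_high //; apply/esym/negbTE; rewrite -ltNge; apply: le_lt_trans x_gta.
by case: (v S); rewrite ?mul1r ?mul0r // ltW.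
Qed.

Lemma choquet_indic A : F A -> choquet Omega v (\1_A : T -> R) = ((v A)%:R)%:E.
Proof.
move=> FA; rewrite (@choquet_step _ 1 A) ?mulr1 //.
- move=> x x_le0; apply/seteqP; split=> [w []//|w Ow]; split=> //.
  by apply: le_trans x_le0 _; rewrite indicE; case: (_ \in _).
- move=> x /andP[x_gt0 x_le1]; apply/seteqP; split=> [w [_]|w Aw].
    by rewrite indicE; case: (boolP (w \in A)) => [/set_mem//|_]; rewrite leNgt x_gt0.
  by split; [exact: (F_sub FA) | rewrite indicE mem_set].
- move=> x x_gt1; rewrite -capacity0; congr v; apply/seteqP; split=> w //= [_].
  by rewrite indicE leNgt; case: (_ \in _); rewrite ?x_gt1 // (lt_trans ltr01).
Qed.

Lemma choquet_midpoint_indic A B : F A -> F B -> v A = false ->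
  choquet Omega v (fun w => 2^-1 * \1_A w + (1 - 2^-1) * \1_B w : R)
  = ((v (A `|` B))%:R * 2^-1)%:E.
Proof.
move=> FA FB vA0; set Z := fun w => _.
have Z_ge0 w : 0 <= Z w by rewrite /Z !indicE; case: (_ \in A); case: (_ \in B) => /=; lra.
have XX_Z : XX Z.
  by apply: XX_conv (XX_indic FA) (XX_indic FB); apply/andP; split; lra.
apply: choquet_step => [|x x_le0|x /andP[x_gt0 x_le]|x x_gt].
- by rewrite invr_gt0.
- by apply/seteqP; split=> [w []//|w Ow]; split=> //; exact: le_trans x_le0 _.
- apply/seteqP; split=> [w [_]|w ABw].
    rewrite /Z !indicE; case: (boolP (w \in A)) => [/set_mem|_]; first by left.
    by case: (boolP (w \in B)) => [/set_mem|_ /=]; [right | lra].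
  split; first by case: ABw => [/(F_sub FA)|/(F_sub FB)].
  rewrite /Z !indicE; case: ABw => /mem_set ->; case: (_ \in _) => /=; lra.
- apply/negbTE/negP => v_up; suff : v A by rewrite vA0.
  apply: capacity_le (F_upper XX_Z x) FA _ v_up => w [_].
  rewrite /Z !indicE; case: (boolP (w \in A)) => [/set_mem//|_].
  by case: (_ \in B) => /=; lra.
Qed.

Lemma choquet_convex_nullU : choquet_convex Omega XX v ->
  forall A B, capacity_null v A -> capacity_null v B -> capacity_null v (A `|` B).
Proof.
move=> convex A B [FA vA0] [FB vB0]; split; first exact: FU.
have half : 0 <= (2^-1 : R) <= 1 by apply/andP; split; lra.
have := convex 2^-1 half _ _ (XX_indic FA) (XX_indic FB).
rewrite choquet_midpoint_indic // !choquet_indic // vA0 vB0.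
by case: (v (A `|` B)) => //=; rewrite -!EFinM -EFinD lee_fin; lra.
Qed.

Section finite_cover.
Hypothesis nullU :
  forall {A B}, capacity_null v A -> capacity_null v B -> capacity_null v (A `|` B).

Lemma capacity_null_bigcup {K : finType} {M : K -> set T} :
  (forall k, capacity_null v (M k)) -> capacity_null v (\bigcup_k M k).
Proof.
move=> null_M; rewrite bigcup_finType.
by apply: (big_ind (capacity_null v)) => //; split; [exact: F0 | exact: capacity0].
Qed.

Context {I J : finType} {p : I -> T} {N : J -> set T}.
Hypothesis null_N : forall j, capacity_null v (N j).
Hypothesis cover : Omega `<=` range p `|` \bigcup_j N j.

Lemma capacity_atom {B : set T} : F B -> v B -> exists2 i, B (p i) & atoms v (p i).
Proof.
move=> FB vB; apply: contrapT => /forall2NP no_atom.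
have null_Bp : capacity_null v (\bigcup_i (B `&` [set p i])).
  apply: capacity_null_bigcup => i; rewrite setI1.
  case: ifPn => [/set_mem Bp|_]; last by split; [exact: F0 | exact: capacity0].
  have Op := F_sub FB _ Bp; split; first exact: F_set1.
  by apply/negbTE; case: (no_atom i) => // not_atom; apply/negP => vp; apply: not_atom.
have [FBN vBN0] := nullU null_Bp (capacity_null_bigcup null_N).
suff : v (\bigcup_i (B `&` [set p i]) `|` \bigcup_j N j) by rewrite vBN0.
apply: (capacity_le FB FBN _ vB) => w Bw.
have [[i _ piw]|] := cover _ (F_sub FB _ Bw); last by right.
by left; exists i => //; split; rewrite ?piw.
Qed.

Lemma atoms_sub_range : atoms v `<=` range p.
Proof.
move=> w [Ow vw]; have [//|[j _ Njw]] := cover _ Ow.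
have [FN vN0] := null_N j.
suff : v (N j) by rewrite vN0.
by apply: capacity_le (F_set1 Ow) FN _ vw => _ ->.
Qed.

Lemma atoms_finite : finite_set (atoms v).
Proof.
by apply: sub_finite_set atoms_sub_range _; apply: finite_image; exact: finite_finset.
Qed.

Lemma choquet_max_atoms (X : T -> R) : XX X ->
  exists2 m, is_max_over (atoms v) X m & choquet Omega v X = m%:E.
Proof.
move=> XX_X; have [i0 _ atom_i0] := capacity_atom FT capacityT.
case: (@arg_maxP _ _ _ i0 [pred i | `[< atoms v (p i) >]] (X \o p)).
  exact/asboolP.
move=> i /asboolP [Oi vi] max_i; exists (X (p i)).
  split; first by exists (p i).
  by move=> _ /[dup] /atoms_sub_range [j _ <-] atom_j; apply: max_i; exact/asboolP.
apply: choquet_threshold => x; apply/idP/idP => [v_up|x_le].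
  have [j [_ x_le] atom_j] := capacity_atom (F_upper XX_X x) v_up.
  by apply: le_trans x_le _; apply: max_i; exact/asboolP.
by apply: capacity_le (F_set1 Oi) (F_upper XX_X x) _ vi => _ ->.
Qed.

End finite_cover.
End fixed_capacity.

Lemma choquet_convex_max {v : set T -> bool} {A : set T} :
  (forall X, XX X -> exists2 m, is_max_over A X m & choquet Omega v X = m%:E) ->
  choquet_convex Omega XX v.
Proof.
move=> maxA l l01 X Y XX_X XX_Y.
have [mZ [[w Aw <-] _] ->] := maxA _ (XX_conv l01 XX_X XX_Y).
have [mX [_ le_mX] ->] := maxA _ XX_X.
have [mY [_ le_mY] ->] := maxA _ XX_Y.
rewrite -!EFinM -EFinD lee_fin; case/andP: l01 => l_ge0 l_le1.
by apply: lerD; apply: ler_wpM2l; rewrite ?subr_ge0 //; [exact: le_mX | exact: le_mY].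
Qed.

Lemma prop5_on_finite_mod_null :
  (forall v, binary_capacity Omega F v -> continuous_capacity (R:=R) F v ->
     finite_mod_null v) ->
  prop5_on Omega F XX.
Proof.
move=> fmn v capv contv; split=> [convex|[A [_ _ maxA]]].
  have nullU := choquet_convex_nullU capv convex.
  have [I [J [p [N [null_N cover]]]]] := fmn v capv contv.
  exists (atoms v); split=> [||X]; first exact: (atoms_finite capv null_N cover).
    by move=> w [].
  exact: (choquet_max_atoms capv nullU null_N cover).
exact: (choquet_convex_max maxA).
Qed.

End choquet_binary_capacity.

Lemma bounded_on_indic {R : realType} {T : Type} (D A : set T) :
  bounded_on D (\1_A : T -> R).
Proof. by exists 1 => w _; rewrite indicE; case: (_ \in _); rewrite ?normr1 ?normr0. Qed.

Lemma bounded_on_conv {R : realType} {T : Type} (D : set T) (l : R) (X Y : T -> R) :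
  0 <= l <= 1 -> bounded_on D X -> bounded_on D Y ->
  bounded_on D (fun w => l * X w + (1 - l) * Y w).
Proof.
move=> /andP[l_ge0 l_le1] [MX le_MX] [MY le_MY]; exists (`|MX| + `|MY|) => w Dw.
apply: (le_trans (ler_normD _ _)); rewrite !normrM (ger0_norm l_ge0).
rewrite (@ger0_norm _ (1 - l)) ?subr_ge0 //.
have := le_trans (le_MX w Dw) (ler_norm MX); have := le_trans (le_MY w Dw) (ler_norm MY).
have := normr_ge0 (X w); have := normr_ge0 (Y w); nra.
Qed.

Lemma prop5_on_discrete {R : realType} {T : Type} :
  (forall v, binary_capacity setT setT v -> continuous_capacity (R:=R) setT v ->
     finite_mod_null [set: T] setT v) ->
  prop5_on [set: T] setT (bounded_on (R:=R) setT).
Proof.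
apply: prop5_on_finite_mod_null => //.
- by move=> A _; exact: bounded_on_indic.
- by move=> l X Y; exact: bounded_on_conv.
Qed.

Lemma finite_mod_null_finType {T : finType} (v : set T -> bool) :
  finite_mod_null setT setT v.
Proof. by exists T, void, id, (fun=> set0); split=> [[]|w _]; left; exists w. Qed.

Lemma finite_mod_null_nat {R : realType} (v : set nat -> bool) :
  continuous_capacity (R:=R) setT v -> finite_mod_null setT setT v.
Proof.
move=> contv; pose tail n := [set j | (n <= j)%N].
have [n tail_null] : exists n, v (tail n) = false.
  apply: (continuous_capacity_null contv) => // [k j /ltnW //|].
  by apply/seteqP; split=> // j /(_ j.+1 I); rewrite /tail /= ltnn.
exists 'I_n, unit, val, (fun=> tail n); split=> // w _.
by have [w_lt|w_ge] := ltnP w n; [left; exists (Ordinal w_lt) | right; exists tt].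
Qed.

Lemma bigcap_ball_punctured {R : realType} (w : R) :
  \bigcap_n (ball w n.+1%:R^-1 `\ w) = set0.
Proof.
apply/seteqP; split=> // y near_y.
have [_ /eqP y_neq_w] := near_y 0%N I.
have d_gt0 : 0 < `|w - y| by rewrite normr_gt0 subr_eq0 eq_sym.
have [n _ small_n] := near_infty_natSinv_lt (PosNum d_gt0).
have [+ _] := near_y n I; rewrite -ball_normE /ball_ /= => lt_d.
by have := lt_trans lt_d (small_n n (leqnn n)); rewrite ltxx.
Qed.

Lemma finite_mod_null_compact {R : realType} (K : set R) (v : set R -> bool) :
  compact K -> continuous_capacity (R:=R) (fun A => A `<=` K /\ measurable A) v ->
  finite_mod_null K (fun A => A `<=` K /\ measurable A) v.
Proof.
move=> cptK contv.
have mK := compact_measurable cptK.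
pose S w n := K `&` (ball w n.+1%:R^-1 `\ w).
have FS w n : S w n `<=` K /\ measurable (S w n).
  split=> [y []//|]; apply: measurableI mK _.
  by apply: measurableD; [exact: measurable_ball | exact: measurable_set1].
have S_null w : exists n, v (S w n) = false.
  apply: (continuous_capacity_null contv (FS w)).
    move=> n y [Ky [Bwy y_neq_w]]; split=> //; split=> //.
    by apply: le_ball Bwy; rewrite lef_pV2 ?posrE // ler_nat.
  apply/seteqP; split=> // y Sy.
  suff : (\bigcap_n (ball w n.+1%:R^-1 `\ w)) y by rewrite bigcap_ball_punctured.
  by move=> n _; case: (Sy n I).
have [r null_S] := choice S_null.
have := cptK; rewrite compact_cover => /(_ R K (fun w => ball w (r w).+1%:R^-1)).
case=> [w _|w Kw|D _ coverD]; first exact: ball_open.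
  by exists w => //; exact: ballxx.
exists D, D, val, (fun i => S (val i) (r (val i))); split=> [i|w Kw].
  by split; [exact: FS | exact: null_S].
have [i Di Bw] := coverD w Kw.
have [<-|w_neq_i] := pselect (i = w); first by left; exists [` Di]%fset.
by right; exists [` Di]%fset => //; split=> //; split=> // /esym.
Qed.

Lemma prop5_on_compact {R : realType} (K : set R) : compact K ->
  prop5_on K (fun A => A `<=` K /\ measurable A)
    (fun X : R -> R => bounded_on K X /\ measurable_fun K X).
Proof.
move=> cptK; have mK := compact_measurable cptK.
apply: prop5_on_finite_mod_null.
- by move=> A [].
- by split; [exact: sub0set | exact: measurable0].
- by split.
- by move=> w Kw; split; [move=> _ -> | exact: measurable_set1].
- by move=> A B [AK mA] [BK mB]; split; [rewrite subUset | exact: measurableU].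
- move=> X [_ mX] x; split=> [w []//|].
  have -> : upper K X x = K `&` X @^-1` `[x, +oo[.
    by apply/seteqP; split=> w /= [Kw]; rewrite in_itv /= andbT.
  exact: mX.
- move=> A [_ mA]; split; first exact: bounded_on_indic.
  exact: measurable_indic.
- move=> l X Y l01 [bX mX] [bY mY]; split; first exact: bounded_on_conv.
  by apply: measurable_funD; apply: measurable_funM => //; exact: measurable_cst.
- by move=> v _ contv; exact: finite_mod_null_compact.
Qed.

Theorem proposition5 (R : realType) :
  (* Omega = {1,...,n} (modelled by 'I_n), F = power set, X = all functions *)
  (forall n : nat,
     @prop5_on R 'I_n setT setT (fun X : 'I_n -> R => bounded_on setT X)) /\
  (* Omega = N, F = power set, X = bounded functions *)
  @prop5_on R nat setT setT (fun X : nat -> R => bounded_on setT X) /\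
  (* Omega = [0,1], F = Borel subsets of [0,1], X = bounded Borel functions *)
  @prop5_on R R (`[0, 1]%classic : set R)
    (fun A : set R => A `<=` (`[0, 1]%classic : set R) /\ measurable A)
    (fun X : R -> R => bounded_on (`[0, 1]%classic : set R) X /\
                       measurable_fun (`[0, 1]%classic : set R) X).
Proof.
split; first by move=> n; apply: prop5_on_discrete => v _ _; exact: finite_mod_null_finType.
split; last by apply: prop5_on_compact; exact: segment_compact.
by apply: prop5_on_discrete => v _; exact: finite_mod_null_nat.
Qed.
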